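(* Consider Algorithm NCB run with inputs $k\ge2$ and $T$ on an instance with $\mu^*\ge\frac{32\sqrt{k\log k\log T}}{\sqrt T}$, and let $i^*$ be an arm with $\mu_{i^*}=\mu^*$. On the event $G$, for every round $t>\widetilde T$ (i.e. every round of Phase II), the Nash confidence bound of $i^*$ at round $t$ satisfies $\mathrm{NCB}_{i^*,t}\ge\mu^*$.
   Context: Bandit setup: $k$ arms, arm $i$ a distribution on $[0,1]$ with mean $\mu_i$, $\mu^*:=\max_i\mu_i$. $\log$ is the natural logarithm. Canonical model: a $k\times T$ table $(Y_{i,s})$ of independent entries with $Y_{i,s}$ distributed as arm $i$; the $s$-th pull of arm $i$ yields $Y_{i,s}$. Let $\widehat\mu_{i,s}:=\frac1s\sum_{r=1}^sY_{i,r}$. Algorithm NCB (inputs $k,T$): $\widetilde T:=16\sqrt{\frac{kT\log T}{\log k}}$. Phase I: in each round $t\le\widetilde T$ pull a uniformly random arm. Phase II: in each round $\widetilde T<t\le T$ pull an arm maximizing $\mathrm{NCB}_i:=\widehat\mu_i+4\sqrt{\widehat\mu_i\log T/n_i}$, where $n_i$ is the number of pulls of $i$ before the round and $\widehat\mu_i$ its empirical mean (ties arbitrary); $\mathrm{NCB}_{i,t}$ denotes this value at round $t$. Events: $G_1$: every arm is pulled at least $\frac{\widetilde T}{2k}$ times in Phase I. $G_2$: for every arm $i$ with $\mu_i>\frac{6\sqrt{k\log k\log T}}{\sqrt T}$ and every integer $s$ with $\frac{\widetilde T}{2k}\le s\le T$, $|\mu_i-\widehat\mu_{i,s}|\le 3\sqrt{\frac{\mu_i\log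 T}{s}}$. $G_3$: for every arm $j$ with $\mu_j\le\frac{6\sqrt{k\log k\log T}}{\sqrt T}$ and every integer $s$ with $\frac{\widetilde T}{2k}\le s\le T$, $\widehat\mu_{j,s}\le \frac{9\sqrt{k\log k\log T}}{\sqrt T}$. $G:=G_1\cap G_2\cap G_3$. *)

From mathcomp Require Import all_boot all_order all_algebra.
From mathcomp Require Import all_classical all_reals all_analysis.
Set Implicit Arguments. Unset Strict Implicit. Unset Printing Implicit Defensive.
Import Order.TTheory GRing.Theory Num.Theory.
Local Open Scope ring_scope.

Section NCB.
Variable R : realType.

Definition mustar (k : nat) (mu : 'I_k -> R) : R := \big[Num.max/0]_(i < k) mu i.

Definition Ttilde (k T : nat) : R :=
  16 * Num.sqrt (k%:R * T%:R * ln (T%:R : R) / ln (k%:R : R)).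

Definition thr (k T : nat) : R :=
  Num.sqrt (k%:R * ln (k%:R : R) * ln (T%:R : R)) / Num.sqrt (T%:R).

(* canonical model: Y i s is the s-th pull (s >= 1) of arm i;
   muhat_s Y i s = (1/s) sum_{r=1}^s Y i r *)
Definition muhat_s (k : nat) (Y : 'I_k -> nat -> R) (i : 'I_k) (s : nat) : R :=
  (\sum_(1 <= r < s.+1) Y i r) / s%:R.

(* a t = arm pulled at round t (t >= 1);
   npulls a i t = number of pulls of i before round t *)
Definition npulls (k : nat) (a : nat -> 'I_k) (i : 'I_k) (t : nat) : nat :=
  \sum_(1 <= r < t) (a r == i).

Definition NCB (k T : nat) (Y : 'I_k -> nat -> R) (a : nat -> 'I_k)
    (i : 'I_k) (t : nat) : R :=
  let n := npulls a i t in
  let m := muhat_s Y i n in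
  m + 4 * Num.sqrt (m * ln (T%:R : R) / n%:R).

Definition ncb_run (k T : nat) (Y : 'I_k -> nat -> R) (a : nat -> 'I_k) : Prop :=
  forall t : nat, Ttilde k T < t%:R -> (t <= T)%N ->
    forall j : 'I_k, NCB T Y a j t <= NCB T Y a (a t) t.

Definition G1 (k T : nat) (a : nat -> 'I_k) : Prop :=
  forall i : 'I_k,
    Ttilde k T / (2 * k%:R) <=
      (\sum_(1 <= r < T.+1 | (r%:R <= Ttilde k T :> R)) (a r == i))%:R.

Definition G2 (k T : nat) (mu : 'I_k -> R) (Y : 'I_k -> nat -> R) : Prop :=
  forall i : 'I_k, 6 * thr k T < mu i ->
    forall s : nat, Ttilde k T / (2 * k%:R) <= s%:R -> (s <= T)%N ->
      `|mu i - muhat_s Y i s| <= 3 * Num.sqrt (mu i * ln (T%:R : R) / s%:R).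

Definition G3 (k T : nat) (mu : 'I_k -> R) (Y : 'I_k -> nat -> R) : Prop :=
  forall j : 'I_k, mu j <= 6 * thr k T ->
    forall s : nat, Ttilde k T / (2 * k%:R) <= s%:R -> (s <= T)%N ->
      muhat_s Y j s <= 9 * thr k T.

Definition eventG (k T : nat) (mu : 'I_k -> R) (Y : 'I_k -> nat -> R)
    (a : nat -> 'I_k) : Prop :=
  G1 T a /\ G2 T mu Y /\ G3 T mu Y.

End NCB.

(** On [G] the optimal arm has been pulled at least [T~/(2k)] times by any
    round of Phase II, and [T~ * thr = 16 k log T] turns this into
    [log T / n <= thr / 8 <= mu^*/256].  Hence [G2] puts the empirical mean
    [m] within [3 sqrt(mu^* log T / n) <= 3 mu^*/16] of [mu^*], so
    [m >= 9 mu^*/16] and the bonus [4 sqrt(m log T / n)] is at least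
    [3 sqrt(mu^* log T / n)], which makes up for the possible
    underestimate. *)

From mathcomp Require Import all_boot all_order all_algebra.
From mathcomp Require Import all_classical all_reals all_analysis.
From mathcomp Require Import ring lra.
Import Order.TTheory GRing.Theory Num.Theory.
Local Open Scope ring_scope.

Lemma sqrt_confidence_bonus (R : rcfType) (M m P : R) :
  0 <= m -> 0 <= P -> 64 * P <= M ->
  `|M - m| <= 3 * Num.sqrt (M * P) ->
  M <= m + 4 * Num.sqrt (m * P).
Proof.
move=> m0 P0 PM; rewrite ler_norml => /andP[_ mM].
have M0 : 0 <= M by lra.
have sqrt_MP_le : Num.sqrt (M * P) <= M / 8.
  rewrite -[M / 8]ger0_norm ?divr_ge0 // -sqrtr_sqr ler_sqrt ?sqr_ge0 //.
  by rewrite expr2; nra.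
have m_ge : 9 / 16 * M <= m by lra.
have : 3 / 4 * Num.sqrt (M * P) <= Num.sqrt (m * P).
  rewrite -[3 / 4]ger0_norm // -[`|3 / 4|]sqrtr_sqr -sqrtrM ?sqr_ge0 //.
  by rewrite ler_sqrt ?mulr_ge0 // mulrA ler_wpM2r // expr2; lra.
lra.
Qed.

Section NCBRun.
Variables (R : realType) (k T : nat).
Implicit Types (Y : 'I_k -> nat -> R) (a : nat -> 'I_k) (i : 'I_k) (n t : nat).

Lemma npulls_le a i t : (npulls a i t <= t)%N.
Proof.
apply: (@leq_trans (\sum_(1 <= r < t) 1)%N).
  by apply: leq_sum => r _; exact: leq_b1.
by rewrite sum_nat_const_nat muln1 leq_subr.
Qed.

Lemma phaseI_pulls_le_npulls a i t :
  (t <= T)%N -> Ttilde R k T < t%:R ->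
  (\sum_(1 <= r < T.+1 | (r%:R <= Ttilde R k T :> R)) (a r == i)
     <= npulls a i t)%N.
Proof.
move=> tT Ht; rewrite /npulls (@big_nat_widen _ _ _ 1 t T.+1) ?leqW //.
rewrite big_mkcond [X in (_ <= X)%N]big_mkcond /=.
apply: leq_sum => r _; case: ifP => // r_phaseI.
suff -> : (r < t)%N by [].
by rewrite -(ltr_nat R); exact: le_lt_trans Ht.
Qed.

Lemma Ttilde_ge0 : 0 <= Ttilde R k T.
Proof. by rewrite /Ttilde mulr_ge0 ?sqrtr_ge0. Qed.

Lemma thr_ge0 : 0 <= thr R k T.
Proof. by rewrite /thr divr_ge0 ?sqrtr_ge0. Qed.

Lemma muhat_s_ge0 Y i s : (forall r, 0 <= Y i r) -> 0 <= muhat_s Y i s.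
Proof. by move=> Y0; rewrite /muhat_s divr_ge0 // sumr_ge0. Qed.

Lemma NCB_ge0 Y a i t : (forall r, 0 <= Y i r) -> 0 <= NCB T Y a i t.
Proof.
move=> Y0; have m0 := @muhat_s_ge0 Y i (npulls a i t) Y0.
by rewrite /NCB /= addr_ge0 // mulr_ge0 // sqrtr_ge0.
Qed.

Hypotheses (k_gt1 : (1 < k)%N) (T_gt0 : (0 < T)%N).

Lemma Ttilde_mul_thr :
  Ttilde R k T * thr R k T = 16 * k%:R * ln (T%:R : R).
Proof.
set L := ln (T%:R : R); set Lk := ln (k%:R : R).
have kR : 0 < (k%:R : R) by rewrite ltr0n ltnW.
have Lk0 : 0 < Lk by rewrite ln_gt0 // ltr1n.
have L0 : 0 <= L by rewrite ln_ge0 // ler1n.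
have sT : 0 < Num.sqrt (T%:R : R) by rewrite sqrtr_gt0 ltr0n.
have sqrt_prod : Num.sqrt (k%:R * T%:R * L / Lk) * Num.sqrt (k%:R * Lk * L)
    = k%:R * L * Num.sqrt (T%:R : R).
  rewrite -sqrtrM; last by rewrite divr_ge0 ?mulr_ge0 // ltW.
  have -> : k%:R * T%:R * L / Lk * (k%:R * Lk * L) = (k%:R * L) ^+ 2 * T%:R.
    by field; rewrite gt_eqF.
  by rewrite sqrtrM ?sqr_ge0 // sqrtr_sqr ger0_norm // mulr_ge0 // ltW.
rewrite /Ttilde /thr -/L -/Lk mulrA -[_ * _ * Num.sqrt _]mulrA sqrt_prod.
by field; rewrite gt_eqF.
Qed.

Lemma log_div_le_thr n :
  Ttilde R k T / (2 * k%:R) <= n%:R -> ln (T%:R : R) / n%:R <= thr R k T / 8.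
Proof.
move=> n_ge; have [->|n_neq0] := eqVneq n 0%N.
  by rewrite invr0 mulr0 divr_ge0 ?thr_ge0.
have nR : 0 < (n%:R : R) by rewrite ltr0n lt0n.
have kR : 0 < (k%:R : R) by rewrite ltr0n ltnW.
have : Ttilde R k T / (2 * k%:R) * thr R k T <= n%:R * thr R k T.
  by rewrite ler_wpM2r ?thr_ge0.
have -> : Ttilde R k T / (2 * k%:R) * thr R k T = 8 * ln (T%:R : R).
  by rewrite mulrAC Ttilde_mul_thr; field; rewrite gt_eqF.
by rewrite ler_pdivrMr //; lra.
Qed.

End NCBRun.

Theorem lemma2 (R : realType) (k T : nat) (mu : 'I_k -> R)
    (Y : 'I_k -> nat -> R) (a : nat -> 'I_k) (istar : 'I_k) :
  (2 <= k)%N ->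
  (forall i, 0 <= mu i <= 1) ->
  (forall i s, 0 <= Y i s <= 1) ->
  32 * thr R k T <= mustar mu ->
  mu istar = mustar mu ->
  ncb_run T Y a ->
  eventG T mu Y a ->
  forall t : nat, Ttilde R k T < t%:R -> (t <= T)%N ->
    mustar mu <= NCB T Y a istar t.
Proof.
move=> k_ge2 mu01 Y01 thr_le star_opt _ [G1 [G2 _]] t Ht tT.
have Y0 r : 0 <= Y istar r by case/andP: (Y01 istar r).
have [mu0|mu_neq0] := eqVneq (mustar mu) 0; first by rewrite mu0; exact: NCB_ge0.
have mu_gt0 : 0 < mu istar.
  by rewrite lt0r star_opt mu_neq0 -star_opt; case/andP: (mu01 istar).
have T_gt0 : (0 < T)%N.
  apply: leq_trans tT; rewrite -(ltr_nat R).
  exact: le_lt_trans (Ttilde_ge0 R k T) Ht.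
set n := npulls a istar t.
have n_ge : Ttilde R k T / (2 * k%:R) <= n%:R.
  by rewrite (le_trans (G1 istar)) // ler_nat phaseI_pulls_le_npulls.
have n_le : (n <= T)%N by apply: leq_trans tT; exact: npulls_le.
have L_div_le : ln (T%:R : R) / n%:R <= thr R k T / 8 by exact: log_div_le_thr.
have thr_lt : 6 * thr R k T < mu istar by have := thr_ge0 R k T; lra.
rewrite -star_opt /NCB -/n -mulrA.
apply: sqrt_confidence_bonus.
- exact: muhat_s_ge0.
- by rewrite divr_ge0 // ln_ge0 // ler1n.
- rewrite -star_opt in thr_le; lra.
- by rewrite mulrA G2.
Qed.
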